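(* Let $G=(V,E,\mu,\omega)$ be a weighted graph with a fixed reference vertex $p\in V$, and suppose there exist constants $D>0$ and $0\le\alpha\le2$ such that $\mathrm{Deg}(x)\le D\,d(x,p)^{\alpha}$ for all $x\in V$, $x\ne p$. Let $T\in(0,\infty]$ and let $u\in C^2_t([0,T)\times V)$ satisfy the homogeneous wave equation $\partial_t^2u(t,x)=\Delta u(t,x)$ for all $(t,x)\in[0,T)\times V$ (the time derivative at $t=0$ being one-sided). Suppose that for some $C>0$ and $A_1\in[0,2-\alpha]$, $$|u(t,x)|\le C\,d(x,p)^{A_1 d(x,p)}\quad\text{for all }(t,x)\in[0,T)\times V,\ x\ne p.$$ Then for every $x\in V$, the function $t\mapsto u(t,x)$ is real analytic on $[0,T)$, with radius of analyticity $r$ (i.e. for every $t_0\in[0,T)$ the Taylor series of $u(\cdot,x)$ at $t_0$ converges to $u(t,x)$ for all $t\in[0,T)$ with $|t-t_0|<r$) satisfying $r=+\infty$ if $A_1<2-\alpha$, and $r\ge\frac1e\sqrt{\frac{2}{D}}$ if $A_1=2-\alpha$.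
   Context: A weighted graph $G=(V,E,\mu,\omega)$ consists of a locally finite, connected, simple, undirected graph $(V,E)$, a symmetric edge weight $\omega:E\to(0,\infty)$, $\{x,y\}\mapsto\omega_{xy}=\omega_{yx}$, and a vertex weight $\mu:V\to(0,\infty)$. Write $x\sim y$ if $\{x,y\}\in E$; $d(x,y)$ is the combinatorial graph distance. The Laplacian is $\Delta f(x)=\sum_{y\sim x}\frac{\omega_{xy}}{\mu_x}(f(y)-f(x))$ for $f:V\to\mathbb{R}$, and the weighted degree is $\mathrm{Deg}(x)=\sum_{y\sim x}\frac{\omega_{xy}}{\mu_x}$. For an interval $I$ and $k\in\mathbb{N}_0\cup\{\infty\}$, $u\in C^k_t(I\times V)$ means $u:I\times V\to\mathbb{R}$ and $u(\cdot,x)\in C^k(I)$ for every $x\in V$; $\Delta$ acts in the space variable. *)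

From Stdlib Require Import Reals List.
From Coquelicot Require Import Coquelicot.
Open Scope R_scope.

Section Graph.
Context {V : Type}.

(* A locally finite simple undirected graph is given by its neighbour lists:
   nbrs x lists (without repetition) exactly the neighbours of x. *)
Inductive walk (nbrs : V -> list V) : nat -> V -> V -> Prop :=
| walk0 x : walk nbrs 0 x x
| walkS n x y z : In y (nbrs x) -> walk nbrs n y z -> walk nbrs (S n) x z.

Definition simple_graph (nbrs : V -> list V) : Prop :=
  (forall x, NoDup (nbrs x)) /\
  (forall x, ~ In x (nbrs x)) /\
  (forall x y, In y (nbrs x) -> In x (nbrs y)).

Definition connected (nbrs : V -> list V) : Prop :=
  forall x y, exists n, walk nbrs n x y.

Definition weights_ok (nbrs : V -> list V) (w : V -> V -> R) (mu : V -> R) : Prop :=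
  (forall x y, In y (nbrs x) -> w x y = w y x /\ 0 < w x y) /\
  (forall x, 0 < mu x).

Definition is_dist_to (nbrs : V -> list V) (p : V) (d : V -> nat) : Prop :=
  forall x, walk nbrs (d x) x p /\ (forall m, walk nbrs m x p -> (d x <= m)%nat).

Definition lap (nbrs : V -> list V) (w : V -> V -> R) (mu : V -> R)
  (f : V -> R) (x : V) : R :=
  fold_right Rplus 0 (map (fun y => w x y / mu x * (f y - f x)) (nbrs x)).

Definition Deg (nbrs : V -> list V) (w : V -> V -> R) (mu : V -> R) (x : V) : R :=
  fold_right Rplus 0 (map (fun y => w x y / mu x) (nbrs x)).

End Graph.

Definition Itime (T : Rbar) (t : R) : Prop := 0 <= t /\ Rbar_lt t T.

Definition is_deriv_within (S : R -> Prop) (f : R -> R) (t l : R) : Prop :=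
  forall eps, 0 < eps -> exists delta, 0 < delta /\
    forall h, h <> 0 -> Rabs h < delta -> S (t + h) ->
      Rabs ((f (t + h) - f t) / h - l) < eps.

Definition cont_within (S : R -> Prop) (f : R -> R) (t : R) : Prop :=
  forall eps, 0 < eps -> exists delta, 0 < delta /\
    forall s, Rabs (s - t) < delta -> S s -> Rabs (f s - f t) < eps.

Definition C2_with (S : R -> Prop) (f f1 f2 : R -> R) : Prop :=
  forall t, S t ->
    is_deriv_within S f t (f1 t) /\ is_deriv_within S f1 t (f2 t) /\
    cont_within S f2 t.

Definition analytic_radius (I : R -> Prop) (f : R -> R) (r : Rbar) : Prop :=
  exists fn : nat -> R -> R,
    (forall t, fn 0%nat t = f t) /\
    (forall n t, I t -> is_deriv_within I (fn n) t (fn (S n) t)) /\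
    (forall t0 t, I t0 -> I t -> Rbar_lt (Rabs (t - t0)) r ->
       is_series (fun n => fn n t0 / INR (Factorial.fact n) * (t - t0) ^ n) (f t)).

From Stdlib Require Import Reals List Lia Lra Classical FunctionalExtensionality.
From Coquelicot Require Import Coquelicot.
Open Scope R_scope.
Notation fact := Factorial.fact.

(* By the wave equation the time derivatives of u(., x) are
   u^(2k) = Delta^k u and u^(2k+1) = Delta^k u_t ([time_deriv]).  Only the
   even ones are estimated, and the Taylor series is controlled through its
   even partial sums ([series_of_even_remainders]). *)

Lemma deriv_within_subset (S S' : R -> Prop) f t l :
  (forall s, S' s -> S s) -> is_deriv_within S f t l -> is_deriv_within S' f t l.
Proof.
  intros HS H eps Heps. destruct (H eps Heps) as [delta [Hdelta Hh]].
  exists delta; split; auto.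
Qed.

Lemma deriv_within_ext (S : R -> Prop) f g t l :
  (forall s, f s = g s) -> is_deriv_within S f t l -> is_deriv_within S g t l.
Proof.
  intros Hfg H eps Heps. destruct (H eps Heps) as [delta [Hdelta Hh]].
  exists delta; split; auto. intros h H1 H2 H3. rewrite <- !Hfg; auto.
Qed.

Lemma deriv_within_const (S : R -> Prop) c t : is_deriv_within S (fun _ => c) t 0.
Proof.
  intros eps Heps. exists 1; split; [lra|]. intros h Hh _ _.
  replace ((c - c) / h - 0) with 0 by (field; auto). rewrite Rabs_R0; lra.
Qed.

Lemma deriv_within_of_derive (S : R -> Prop) f t l :
  is_derive f t l -> is_deriv_within S f t l.
Proof.
  intros H. apply is_derive_Reals in H. intros eps Heps.
  destruct (H eps Heps) as [delta Hdelta]. exists delta; split; [apply cond_pos|].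
  intros h Hh Hhd _. apply Hdelta; auto.
Qed.

Lemma deriv_within_plus (S : R -> Prop) f g t l1 l2 :
  is_deriv_within S f t l1 -> is_deriv_within S g t l2 ->
  is_deriv_within S (fun s => f s + g s) t (l1 + l2).
Proof.
  intros H1 H2 eps Heps.
  destruct (H1 (eps / 2)) as [d1 [Hd1 Hh1]]; [lra|].
  destruct (H2 (eps / 2)) as [d2 [Hd2 Hh2]]; [lra|].
  exists (Rmin d1 d2); split; [apply Rmin_pos; auto|].
  intros h Hh0 Hh HS.
  specialize (Hh1 h Hh0 (Rlt_le_trans _ _ _ Hh (Rmin_l _ _)) HS).
  specialize (Hh2 h Hh0 (Rlt_le_trans _ _ _ Hh (Rmin_r _ _)) HS).
  replace ((f (t + h) + g (t + h) - (f t + g t)) / h - (l1 + l2)) with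
    (((f (t + h) - f t) / h - l1) + ((g (t + h) - g t) / h - l2)) by (field; auto).
  eapply Rle_lt_trans; [apply Rabs_triang|]. lra.
Qed.

Lemma deriv_within_scal (S : R -> Prop) f t l c :
  is_deriv_within S f t l -> is_deriv_within S (fun s => c * f s) t (c * l).
Proof.
  intros H eps Heps.
  assert (Hc : 0 < Rabs c + 1) by (pose proof (Rabs_pos c); lra).
  destruct (H (eps / (Rabs c + 1))) as [delta [Hdelta Hh]].
  { apply Rdiv_lt_0_compat; auto. }
  exists delta; split; auto. intros h H0 H1 H2. specialize (Hh h H0 H1 H2).
  replace ((c * f (t + h) - c * f t) / h - c * l)
    with (c * ((f (t + h) - f t) / h - l)) by (field; auto).
  rewrite Rabs_mult.
  apply Rle_lt_trans with ((Rabs c + 1) * Rabs ((f (t + h) - f t) / h - l)).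
  - pose proof (Rabs_pos ((f (t + h) - f t) / h - l)). nra.
  - replace eps with ((Rabs c + 1) * (eps / (Rabs c + 1))) by (field; lra).
    apply Rmult_lt_compat_l; lra.
Qed.

Lemma deriv_within_minus (S : R -> Prop) f g t l1 l2 :
  is_deriv_within S f t l1 -> is_deriv_within S g t l2 ->
  is_deriv_within S (fun s => f s - g s) t (l1 - l2).
Proof.
  intros H1 H2. replace (l1 - l2) with (l1 + -1 * l2) by ring.
  apply deriv_within_ext with (fun s => f s + -1 * g s); [intros; ring|].
  apply deriv_within_plus; auto. apply deriv_within_scal; auto.
Qed.

Lemma deriv_within_cont (S : R -> Prop) f t l :
  is_deriv_within S f t l -> cont_within S f t.
Proof.
  intros H eps Heps. destruct (H 1 Rlt_0_1) as [delta [Hdelta Hh]].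
  assert (Hl : 0 < Rabs l + 1) by (pose proof (Rabs_pos l); lra).
  exists (Rmin delta (eps / (Rabs l + 1))); split.
  { apply Rmin_pos; auto. apply Rdiv_lt_0_compat; auto. }
  intros s Hs HSs.
  destruct (Req_dec s t) as [->|Hne].
  { rewrite Rminus_diag, Rabs_R0; lra. }
  assert (Hs1 := Rlt_le_trans _ _ _ Hs (Rmin_l _ _)).
  assert (Hs2 := Rlt_le_trans _ _ _ Hs (Rmin_r _ _)).
  specialize (Hh (s - t) ltac:(lra) Hs1).
  replace (t + (s - t)) with s in Hh by ring. specialize (Hh HSs).
  replace (f s - f t) with ((s - t) * ((f s - f t) / (s - t) - l) + (s - t) * l)
    by (field; lra).
  eapply Rle_lt_trans; [apply Rabs_triang|]. rewrite !Rabs_mult.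
  pose proof (Rabs_pos (s - t)). pose proof (Rabs_pos ((f s - f t) / (s - t) - l)).
  apply Rle_lt_trans with (Rabs (s - t) * (Rabs l + 1)); [nra|].
  apply Rmult_lt_reg_r with (/ (Rabs l + 1)); [apply Rinv_0_lt_compat; lra|].
  replace (Rabs (s - t) * (Rabs l + 1) * / (Rabs l + 1)) with (Rabs (s - t)) by (field; lra).
  exact Hs2.
Qed.

(* Clamping to [a, b] turns a function known on [a, b] into one on all of R;
   it is how the two-sided results of the library (MVT, extreme values) are
   applied to one-sided data. *)
Definition clamp (a b s : R) : R := Rmax a (Rmin b s).

Lemma clamp_in a b s : a <= b -> a <= clamp a b s <= b.
Proof. intros. unfold clamp, Rmax, Rmin. repeat destruct Rle_dec; lra. Qed.

Lemma clamp_id a b s : a <= s <= b -> clamp a b s = s.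
Proof. intros. unfold clamp, Rmax, Rmin. repeat destruct Rle_dec; lra. Qed.

Lemma clamp_contract a b s x : a <= x <= b -> Rabs (clamp a b s - x) <= Rabs (s - x).
Proof.
  intros. unfold clamp, Rmax, Rmin.
  repeat destruct Rle_dec; unfold Rabs; repeat destruct Rcase_abs; lra.
Qed.

Lemma clamp_continuity a b f x : a <= b -> a <= x <= b ->
  cont_within (fun s => a <= s <= b) f x -> continuity_pt (fun s => f (clamp a b s)) x.
Proof.
  intros Hab Hx H eps Heps. destruct (H eps Heps) as [delta [Hdelta Hh]].
  exists delta; split; auto. intros s [_ Hs]. simpl in *. unfold R_dist in *.
  rewrite (clamp_id a b x Hx). apply Hh; [|apply clamp_in; auto].
  eapply Rle_lt_trans; [apply clamp_contract; auto|]. auto.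
Qed.

Lemma nonincreasing_of_deriv a b f f' : a <= b ->
  (forall s, a <= s <= b -> is_deriv_within (fun s => a <= s <= b) f s (f' s)) ->
  (forall s, a <= s <= b -> f' s <= 0) -> f b <= f a.
Proof.
  intros Hab Hd Hneg.
  destruct (Req_dec a b) as [<-|Hne]; [lra|].
  destruct (MVT_gen (fun s => f (clamp a b s)) a b f') as [c [Hc E]];
    rewrite Rmin_left, Rmax_right in * by lra.
  - intros x Hx. apply is_derive_Reals. intros eps Heps.
    destruct (Hd x ltac:(lra) eps Heps) as [delta [Hdelta Hh]].
    assert (Hp : 0 < Rmin delta (Rmin (x - a) (b - x))) by (repeat apply Rmin_pos; lra).
    exists (mkposreal _ Hp). intros h Hh0 Hhl. simpl in Hhl.
    assert (h1 := Rlt_le_trans _ _ _ Hhl (Rmin_l _ _)).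
    assert (h2 := Rlt_le_trans _ _ _ Hhl (Rmin_r _ _)).
    assert (h3 := Rlt_le_trans _ _ _ h2 (Rmin_l _ _)).
    assert (h4 := Rlt_le_trans _ _ _ h2 (Rmin_r _ _)).
    assert (Hin : a <= x + h <= b) by (unfold Rabs in *; destruct Rcase_abs; lra).
    rewrite (clamp_id a b (x + h) Hin), (clamp_id a b x) by lra. apply Hh; auto.
  - intros x Hx. apply clamp_continuity; auto. eapply deriv_within_cont; apply Hd; auto.
  - rewrite (clamp_id a b b), (clamp_id a b a) in E by lra.
    specialize (Hneg c Hc). nra.
Qed.

Lemma deriv_comparison a b f f' g g' : a <= b ->
  (forall s, a <= s <= b -> is_deriv_within (fun s => a <= s <= b) f s (f' s)) ->
  (forall s, a <= s <= b -> is_deriv_within (fun s => a <= s <= b) g s (g' s)) ->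
  (forall s, a <= s <= b -> Rabs (f' s) <= g' s) ->
  Rabs (f b - f a) <= g b - g a.
Proof.
  intros Hab Hf Hg Hfg.
  assert (Hup : f b - g b <= f a - g a).
  { apply (nonincreasing_of_deriv a b (fun s => f s - g s) (fun s => f' s - g' s)); auto.
    - intros s Hs. apply deriv_within_minus; auto.
    - intros s Hs. specialize (Hfg s Hs). pose proof (Rle_abs (f' s)). lra. }
  assert (Hlow : - f b - g b <= - f a - g a).
  { apply (nonincreasing_of_deriv a b (fun s => - f s - g s) (fun s => - f' s - g' s)); auto.
    - intros s Hs. apply deriv_within_minus; auto.
      apply deriv_within_ext with (fun s => -1 * f s); [intros; ring|].
      replace (- f' s) with (-1 * f' s) by ring. apply deriv_within_scal; auto.
    - intros s Hs. specialize (Hfg s Hs). pose proof (Rle_abs (- f' s)).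
      rewrite Rabs_Ropp in *. lra. }
  unfold Rabs; destruct Rcase_abs; lra.
Qed.

Fixpoint taylor_poly (c : nat -> R) (t0 : R) (n : nat) (s : R) : R :=
  match n with
  | O => 0
  | S n => taylor_poly c t0 n s + c n / INR (fact n) * (s - t0) ^ n
  end.

Lemma taylor_poly_sum_n c t0 t N :
  sum_n (fun j => c j / INR (fact j) * (t - t0) ^ j) N = taylor_poly c t0 (S N) t.
Proof.
  induction N.
  - rewrite sum_O. simpl. ring.
  - rewrite sum_Sn, IHN. reflexivity.
Qed.

Lemma taylor_poly_center c t0 n : taylor_poly c t0 (S n) t0 = c O.
Proof.
  induction n; [simpl; field|].
  change (taylor_poly c t0 (S n) t0 + c (S n) / INR (fact (S n)) * (t0 - t0) ^ S n = c O).
  rewrite IHn, Rminus_diag, pow_i by lia. ring.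
Qed.

Lemma monomial_derive a t0 n s :
  is_derive (fun s => (a * (s - t0)) ^ S n / INR (fact (S n))) s
    (a * (a * (s - t0)) ^ n / INR (fact n)).
Proof.
  auto_derive; auto.
  change (match n with O => 1 | S _ => INR n + 1 end) with (INR (S n)).
  replace (fact n + n * fact n)%nat with (S n * fact n)%nat by (simpl; lia).
  rewrite mult_INR, S_INR. replace (s + - t0) with (s - t0) by ring.
  pose proof (INR_fact_lt_0 n). pose proof (pos_INR n).
  field. lra.
Qed.

Lemma taylor_poly_deriv (I : R -> Prop) c t0 n s :
  is_deriv_within I (taylor_poly c t0 (S n)) s (taylor_poly (fun j => c (S j)) t0 n s).
Proof.
  induction n.
  - apply (deriv_within_const I (0 + c O / 1 * 1)).
  - change (taylor_poly (fun j => c (S j)) t0 (S n) s) with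
      (taylor_poly (fun j => c (S j)) t0 n s + c (S n) / INR (fact n) * (s - t0) ^ n).
    apply deriv_within_plus; [apply IHn|].
    apply deriv_within_ext with
      (fun s => c (S n) * ((1 * (s - t0)) ^ S n / INR (fact (S n)))).
    { intros r. rewrite Rmult_1_l. field. apply INR_fact_neq_0. }
    replace (c (S n) / INR (fact n) * (s - t0) ^ n)
      with (c (S n) * (1 * (1 * (s - t0)) ^ n / INR (fact n)))
      by (rewrite !Rmult_1_l; field; apply INR_fact_neq_0).
    apply deriv_within_scal, deriv_within_of_derive, monomial_derive.
Qed.

Lemma remainder_step a b t0 r0 r1 M n : a <= t0 <= b -> r0 t0 = 0 ->
  (forall s, a <= s <= b -> is_deriv_within (fun s => a <= s <= b) r0 s (r1 s)) ->
  (forall s, a <= s <= b -> Rabs (r1 s) <= M * Rabs (s - t0) ^ n / INR (fact n)) ->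
  forall t, a <= t <= b -> Rabs (r0 t) <= M * Rabs (t - t0) ^ S n / INR (fact (S n)).
Proof.
  intros Ht0 Hr0 Hd Hbound t Ht.
  set (g := fun sg s => (M * sg) * ((sg * (s - t0)) ^ S n / INR (fact (S n)))).
  assert (Hcmp : forall sg lo hi, sg * sg = 1 -> a <= lo <= hi -> hi <= b ->
            (forall s, lo <= s <= hi -> Rabs (s - t0) = sg * (s - t0)) ->
            Rabs (r0 hi - r0 lo) <= g sg hi - g sg lo).
  { intros sg lo hi Hsg Hlo Hhi Habs.
    apply (deriv_comparison lo hi r0 r1 (g sg)
      (fun s => (M * sg) * (sg * (sg * (s - t0)) ^ n / INR (fact n)))); [lra| | |].
    - intros s Hs. eapply deriv_within_subset; [|apply Hd; lra]. simpl; intros; lra.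
    - intros s Hs.
      apply deriv_within_scal, deriv_within_of_derive, monomial_derive.
    - intros s Hs. specialize (Hbound s ltac:(lra)). rewrite (Habs s Hs) in Hbound.
      replace ((M * sg) * (sg * (sg * (s - t0)) ^ n / INR (fact n)))
        with ((sg * sg) * (M * (sg * (s - t0)) ^ n / INR (fact n))) by (unfold Rdiv; ring).
      rewrite Hsg, Rmult_1_l. exact Hbound. }
  unfold g in Hcmp.
  destruct (Rle_dec t0 t) as [Hle|Hlt].
  - specialize (Hcmp 1 t0 t ltac:(ring) ltac:(lra) ltac:(lra)
      ltac:(intros s Hs; rewrite Rabs_right; lra)).
    rewrite Hr0, Rminus_diag, Rmult_0_r, pow_i, Rminus_0_r in Hcmp by lia.
    rewrite (Rabs_right (t - t0)) by lra. unfold Rdiv in *. rewrite !Rmult_1_l in Hcmp.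
    eapply Rle_trans; [exact Hcmp|]. right; ring.
  - specialize (Hcmp (-1) t t0 ltac:(ring) ltac:(lra) ltac:(lra)
      ltac:(intros s Hs; rewrite Rabs_left1; lra)).
    rewrite Hr0, Rminus_diag, Rmult_0_r, pow_i in Hcmp by lia.
    rewrite (Rabs_left1 (t - t0)) by lra. rewrite Rabs_minus_sym, Rminus_0_r in Hcmp.
    unfold Rdiv in *. replace (- (t - t0)) with (-1 * (t - t0)) by ring.
    eapply Rle_trans; [exact Hcmp|]. right; ring.
Qed.

Lemma taylor_remainder a b t0 (g : nat -> R -> R) M n : a <= t0 <= b ->
  (forall j s, (j < n)%nat -> a <= s <= b ->
     is_deriv_within (fun s => a <= s <= b) (g j) s (g (S j) s)) ->
  (forall s, a <= s <= b -> Rabs (g n s) <= M) ->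
  forall t, a <= t <= b ->
  Rabs (g O t - taylor_poly (fun j => g j t0) t0 n t) <= M * Rabs (t - t0) ^ n / INR (fact n).
Proof.
  intros Ht0. revert g M. induction n; intros g M Hd HM t Ht.
  - simpl. rewrite Rminus_0_r, Rdiv_1_r, Rmult_1_r. auto.
  - apply (remainder_step a b t0
      (fun s => g O s - taylor_poly (fun j => g j t0) t0 (S n) s)
      (fun s => g 1%nat s - taylor_poly (fun j => g (S j) t0) t0 n s)); auto.
    + rewrite taylor_poly_center. ring.
    + intros s Hs. apply deriv_within_minus; [apply Hd; auto; lia|]. apply taylor_poly_deriv.
    + intros s Hs. apply (IHn (fun j => g (S j))); auto.
      intros j s' Hj Hs'. apply Hd; auto; lia.
Qed.

Lemma series_of_even_remainders c t0 t f (e : nat -> R) :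
  is_lim_seq e 0 ->
  (forall k, Rabs (f - taylor_poly c t0 (2 * k) t) <= e k) ->
  (forall k, Rabs (c (2 * k)%nat / INR (fact (2 * k)) * (t - t0) ^ (2 * k)) <= e k) ->
  is_series (fun n => c n / INR (fact n) * (t - t0) ^ n) f.
Proof.
  intros He Hrem Hterm.
  cut (is_lim_seq (sum_n (fun n => c n / INR (fact n) * (t - t0) ^ n)) f); [auto|].
  apply is_lim_seq_spec. intros eps.
  apply is_lim_seq_spec in He.
  destruct (He (pos_div_2 eps)) as [N HN]. simpl in HN.
  exists (2 * N)%nat. intros n Hn. rewrite taylor_poly_sum_n, Rabs_minus_sym.
  destruct (Nat.Even_or_Odd (S n)) as [[k Hk]|[k Hk]]; rewrite Hk.
  - specialize (HN k ltac:(lia)). rewrite Rminus_0_r in HN.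
    pose proof (Rle_abs (e k)). pose proof (Hrem k). pose proof (cond_pos eps). lra.
  - replace (2 * k + 1)%nat with (S (2 * k)) by lia.
    change (taylor_poly c t0 (S (2 * k)) t) with
      (taylor_poly c t0 (2 * k) t + c (2 * k)%nat / INR (fact (2 * k)) * (t - t0) ^ (2 * k)).
    specialize (HN k ltac:(lia)). rewrite Rminus_0_r in HN.
    pose proof (Rle_abs (e k)). pose proof (Hrem k). pose proof (Hterm k).
    set (P := taylor_poly c t0 (2 * k) t) in *.
    set (a := c (2 * k)%nat / INR (fact (2 * k)) * (t - t0) ^ (2 * k)) in *.
    assert (Rabs (f - (P + a)) <= Rabs (f - P) + Rabs a).
    { replace (f - (P + a)) with ((f - P) + - a) by ring.
      rewrite <- (Rabs_Ropp a). apply Rabs_triang. }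
    lra.
Qed.

Lemma eventual_ratio_lim (e : nat -> R) (r : R) k0 :
  0 <= r < 1 -> (forall k, 0 <= e k) -> (forall k, (k0 <= k)%nat -> e (S k) <= e k * r) ->
  is_lim_seq e 0.
Proof.
  intros Hr He Hratio.
  apply (is_lim_seq_incr_n e k0).
  assert (Hgeom : forall n, e (n + k0)%nat <= e k0 * r ^ n).
  { induction n; simpl; [lra|].
    eapply Rle_trans; [apply Hratio; lia|]. pose proof (He k0). nra. }
  apply is_lim_seq_le_le with (fun _ => 0) (fun n => e k0 * r ^ n).
  - intros n. split; [apply He | apply Hgeom].
  - apply is_lim_seq_const.
  - replace (Finite 0) with (Rbar_mult (e k0) 0) by (simpl; f_equal; ring).
    apply is_lim_seq_scal_l, is_lim_seq_geom. rewrite Rabs_right; lra.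
Qed.

Lemma exp_le x y : x <= y -> exp x <= exp y.
Proof. intros [H| ->]; [left; apply exp_increasing; auto | right; auto]. Qed.

Lemma ln_1p_le x : 0 < x -> ln (1 + x) <= x.
Proof. intros Hx. rewrite <- (ln_exp x) at 2. apply ln_le; [lra | apply exp_ineq1_le]. Qed.

Lemma nat_above (x : R) : exists n : nat, x <= INR n.
Proof. destruct (INR_archimed 1 x) as [n Hn]; [lra|]. exists n. lra. Qed.

Lemma Rpower_pos x e : 0 < Rpower x e.
Proof. apply exp_pos. Qed.

Lemma Rpower_nat_mono e (m m' : nat) : 0 <= e -> (1 <= m <= m')%nat ->
  Rpower (INR m) e <= Rpower (INR m') e.
Proof.
  intros He Hm. apply Rle_Rpower_l; auto. split; [apply lt_0_INR; lia | apply le_INR; lia].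
Qed.

Definition taylor_majorant (c q beta A1 : R) (b k : nat) : R :=
  c * q ^ k * Rpower (INR (k + b)) (beta * INR k + A1 * INR b) / INR (fact (2 * k)).

Definition majorant_ratio (q beta : R) (b k : nat) : R :=
  q * exp 2 * Rpower (INR (k + b + 1)) beta / (INR (2 * k + 1) * INR (2 * k + 2)).

Lemma taylor_majorant_nonneg c q beta A1 b k : 0 <= c -> 0 <= q ->
  0 <= taylor_majorant c q beta A1 b k.
Proof.
  intros. unfold taylor_majorant. apply Rmult_le_pos.
  - apply Rmult_le_pos; [apply Rmult_le_pos; auto; apply pow_le; auto|].
    apply Rlt_le, Rpower_pos.
  - apply Rlt_le, Rinv_0_lt_compat, INR_fact_lt_0.
Qed.

Lemma Rpower_succ_base m E : 1 <= m -> 0 <= E <= 2 * m ->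
  Rpower (m + 1) E <= Rpower m E * exp 2.
Proof.
  intros Hm HE. unfold Rpower. rewrite <- exp_plus. apply exp_le.
  replace (m + 1) with (m * (1 + / m)) by (field; lra).
  assert (Hinv : 0 < / m) by (apply Rinv_0_lt_compat; lra).
  rewrite ln_mult by lra.
  pose proof (ln_1p_le (/ m) Hinv).
  assert (E * / m <= 2) by (apply Rmult_le_reg_r with m; [lra|]; field_simplify; lra).
  nra.
Qed.

Lemma taylor_majorant_ratio c q beta A1 b k : 0 <= c -> 0 <= q -> 0 <= beta <= 2 ->
  0 <= A1 <= 2 -> (1 <= b)%nat ->
  taylor_majorant c q beta A1 b (S k) <=
    taylor_majorant c q beta A1 b k * majorant_ratio q beta b k.
Proof.
  intros Hc Hq Hb HA Hb1. unfold taylor_majorant, majorant_ratio.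
  set (m := INR (k + b)).
  assert (Hm : 1 <= m) by (unfold m; apply (le_INR 1); lia).
  replace (INR (S k + b)) with (m + 1) by (unfold m; rewrite <- S_INR; f_equal; lia).
  replace (INR (k + b + 1)) with (m + 1) by (unfold m; rewrite (plus_INR (k + b) 1); reflexivity).
  set (E := beta * INR k + A1 * INR b).
  assert (HE : 0 <= E <= 2 * m).
  { unfold E, m. rewrite plus_INR. pose proof (pos_INR k). pose proof (pos_INR b). nra. }
  replace (beta * INR (S k) + A1 * INR b) with (E + beta) by (unfold E; rewrite S_INR; ring).
  rewrite Rpower_plus.
  pose proof (Rpower_succ_base m E Hm HE) as Hgrow.
  replace (2 * S k)%nat with (S (S (2 * k))) by lia.
  rewrite !fact_simpl, !mult_INR.
  replace (INR (S (S (2 * k)))) with (INR (2 * k + 2)) by (f_equal; lia).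
  replace (INR (S (2 * k))) with (INR (2 * k + 1)) by (f_equal; lia).
  pose proof (INR_fact_lt_0 (2 * k)).
  assert (0 < INR (2 * k + 1)) by (apply lt_0_INR; lia).
  assert (0 < INR (2 * k + 2)) by (apply lt_0_INR; lia).
  pose proof (Rpower_pos (m + 1) beta). pose proof (pow_le q k Hq).
  simpl pow.
  set (F := INR (fact (2 * k))) in *. set (a1 := INR (2 * k + 1)) in *.
  set (a2 := INR (2 * k + 2)) in *. set (RB := Rpower (m + 1) beta) in *.
  set (Q := q ^ k) in *.
  replace (c * (q * Q) * (Rpower (m + 1) E * RB) / (a2 * (a1 * F)))
    with ((c * q * Q * RB / (a2 * a1 * F)) * Rpower (m + 1) E) by (field; lra).
  replace (c * Q * Rpower m E / F * (q * exp 2 * RB / (a1 * a2)))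
    with ((c * q * Q * RB / (a2 * a1 * F)) * (Rpower m E * exp 2)) by (field; lra).
  apply Rmult_le_compat_l; auto.
  apply Rmult_le_pos; [repeat apply Rmult_le_pos; lra|].
  apply Rlt_le, Rinv_0_lt_compat. repeat apply Rmult_lt_0_compat; lra.
Qed.

(* Critical exponent beta = 2: the ratio tends to q e^2 / 4, so it is
   eventually below some r < 1 as soon as q e^2 < 4. *)
Lemma majorant_ratio_critical q b : 0 <= q -> q * exp 2 < 4 ->
  exists r k0, 0 <= r < 1 /\ forall k, (k0 <= k)%nat -> majorant_ratio q 2 b k <= r.
Proof.
  intros Hq Hs. set (s := q * exp 2) in *.
  assert (s0 : 0 <= s) by (unfold s; pose proof (exp_pos 2); nra).
  set (r := (s / 4 + 1) / 2). set (del := 2 - s / 2). set (c := INR b + 1).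
  assert (c0 : 1 <= c) by (unfold c; pose proof (pos_INR b); lra).
  assert (Hdel : 0 < del) by (unfold del; lra).
  destruct (nat_above (c + 3 * s * c / del)) as [k0 Hk0].
  exists r, k0. split; [unfold r; lra|].
  intros k Hk. unfold majorant_ratio. fold s.
  assert (Hkr : c + 3 * s * c / del <= INR k) by (eapply Rle_trans; [apply Hk0 | apply le_INR; auto]).
  assert (Hq0 : 0 <= 3 * s * c / del) by (apply Rmult_le_pos; [nra | left; apply Rinv_0_lt_compat; lra]).
  assert (Hk2 : 3 * s * c <= del * INR k).
  { replace (3 * s * c) with (del * (3 * s * c / del)) by (field; lra).
    apply Rmult_le_compat_l; lra. }
  replace (INR (k + b + 1)) with (INR k + c) by (unfold c; rewrite !plus_INR; simpl; ring).
  replace (Rpower (INR k + c) 2) with ((INR k + c) ^ 2)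
    by (replace 2 with (INR 2) by (simpl; ring); rewrite Rpower_pow by lra; reflexivity).
  replace (INR (2 * k + 1)) with (2 * INR k + 1) by (rewrite plus_INR, mult_INR; simpl; ring).
  replace (INR (2 * k + 2)) with (2 * INR k + 2) by (rewrite plus_INR, mult_INR; simpl; ring).
  set (K := INR k) in *.
  assert (Hden : 0 < (2 * K + 1) * (2 * K + 2)) by nra.
  apply Rmult_le_reg_r with ((2 * K + 1) * (2 * K + 2)); auto.
  unfold Rdiv. rewrite Rmult_assoc, Rinv_l, Rmult_1_r by lra.
  assert (s * (K + c) ^ 2 <= s * K * K + del * K * K).
  { assert (s * (2 * K * c + c * c) <= 3 * s * c * K) by (assert (c * c <= K * c) by nra; nra).
    nra. }
  unfold r, del in *. nra.
Qed.

Lemma Rpower_neg_small s eps x : 0 <= s -> 0 < eps ->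
  exp (ln (2 * s + 1) / eps) <= x -> s * Rpower x (- eps) <= / 2.
Proof.
  intros Hs He Hx.
  assert (Hln : ln (2 * s + 1) <= eps * ln x).
  { apply Rmult_le_reg_r with (/ eps); [apply Rinv_0_lt_compat; lra|].
    replace (eps * ln x * / eps) with (ln x) by (field; lra).
    change (ln (2 * s + 1) / eps <= ln x).
    rewrite <- (ln_exp (ln (2 * s + 1) / eps)). apply ln_le; auto. apply exp_pos. }
  assert (Hpow : Rpower x (- eps) <= / (2 * s + 1)).
  { unfold Rpower. rewrite <- (exp_ln (2 * s + 1)), <- exp_Ropp by lra.
    apply exp_le. lra. }
  apply Rle_trans with (s * / (2 * s + 1)); [apply Rmult_le_compat_l; auto|].
  apply Rmult_le_reg_r with (2 * (2 * s + 1)); [lra|].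
  replace (s * / (2 * s + 1) * (2 * (2 * s + 1))) with (2 * s) by (field; lra).
  lra.
Qed.

(* Subcritical exponent beta < 2: the ratio tends to 0. *)
Lemma majorant_ratio_subcritical q beta b : 0 <= q -> 0 <= beta < 2 ->
  exists r k0, 0 <= r < 1 /\ forall k, (k0 <= k)%nat -> majorant_ratio q beta b k <= r.
Proof.
  intros Hq Hb. set (s := q * exp 2).
  assert (s0 : 0 <= s) by (unfold s; pose proof (exp_pos 2); nra).
  set (eps := 2 - beta). assert (He : 0 < eps) by (unfold eps; lra).
  set (c := INR b + 1).
  assert (c0 : 1 <= c) by (unfold c; pose proof (pos_INR b); lra).
  destruct (nat_above (c + exp (ln (2 * s + 1) / eps))) as [k0 Hk0].
  exists (1 / 2), k0. split; [lra|].
  intros k Hk. unfold majorant_ratio. fold s.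
  assert (Hkr : c + exp (ln (2 * s + 1) / eps) <= INR k)
    by (eapply Rle_trans; [apply Hk0 | apply le_INR; auto]).
  pose proof (exp_pos (ln (2 * s + 1) / eps)).
  replace (INR (k + b + 1)) with (INR k + c) by (unfold c; rewrite !plus_INR; simpl; ring).
  set (x := INR k + c).
  assert (Hxp : 0 < x) by (unfold x; lra).
  assert (Hsmall : s * Rpower x (- eps) <= / 2) by (apply Rpower_neg_small; auto; unfold x; lra).
  replace beta with (2 + - eps) by (unfold eps; ring).
  rewrite Rpower_plus.
  replace (Rpower x 2) with (x ^ 2)
    by (replace 2 with (INR 2) by (simpl; ring); rewrite Rpower_pow by auto; reflexivity).
  replace (INR (2 * k + 1)) with (2 * INR k + 1) by (rewrite plus_INR, mult_INR; simpl; ring).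
  replace (INR (2 * k + 2)) with (2 * INR k + 2) by (rewrite plus_INR, mult_INR; simpl; ring).
  set (K := INR k) in *.
  assert (HK : 0 <= K) by (unfold K; apply pos_INR).
  assert (Hden : 0 < (2 * K + 1) * (2 * K + 2)) by nra.
  apply Rmult_le_reg_r with ((2 * K + 1) * (2 * K + 2)); auto.
  unfold Rdiv. rewrite Rmult_assoc, Rinv_l, Rmult_1_r by lra.
  pose proof (Rpower_pos x (- eps)).
  (* x <= 2k, so x^2 <= (2k + 1)(2k + 2) *)
  assert (x ^ 2 <= (2 * K + 1) * (2 * K + 2)) by (unfold x in *; simpl; nra).
  set (Y := Rpower x (- eps)) in *.
  assert (s * Y * x ^ 2 <= / 2 * x ^ 2) by (apply Rmult_le_compat_r; [apply pow2_ge_0 | lra]).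
  nra.
Qed.

Lemma taylor_majorant_lim c q beta A1 b : 0 <= c -> 0 <= q -> 0 <= beta <= 2 ->
  0 <= A1 <= 2 -> (1 <= b)%nat -> (beta < 2 \/ q * exp 2 < 4) ->
  is_lim_seq (taylor_majorant c q beta A1 b) 0.
Proof.
  intros Hc Hq Hb HA Hb1 Hcase.
  assert (Hratio : exists r k0, 0 <= r < 1 /\
            forall k, (k0 <= k)%nat -> majorant_ratio q beta b k <= r).
  { destruct (Rlt_le_dec beta 2) as [Hlt|Hge].
    - apply majorant_ratio_subcritical; auto. lra.
    - replace beta with 2 by lra. apply majorant_ratio_critical; auto.
      destruct Hcase; [lra | auto]. }
  destruct Hratio as [r [k0 [Hr Hrk]]].
  apply (eventual_ratio_lim _ r k0 Hr).
  - intros k. apply taylor_majorant_nonneg; auto.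
  - intros k Hk. eapply Rle_trans; [apply taylor_majorant_ratio; auto|].
    apply Rmult_le_compat_l; [apply taylor_majorant_nonneg; auto | apply Hrk; auto].
Qed.

Section Laplacian.
Context {V : Type} (nbrs : V -> list V) (w : V -> V -> R) (mu : V -> R).

Lemma list_sum_deriv (I : R -> Prop) (l : list V) (F : R -> V -> R) (F' : V -> R) t :
  (forall y, In y l -> is_deriv_within I (fun s => F s y) t (F' y)) ->
  is_deriv_within I (fun s => fold_right Rplus 0 (map (F s) l)) t
    (fold_right Rplus 0 (map F' l)).
Proof.
  induction l as [|y l IH]; intros H; simpl.
  - apply deriv_within_const.
  - apply deriv_within_plus; [apply H; simpl; auto|].
    apply IH. intros; apply H; simpl; auto.
Qed.

Lemma lap_deriv (I : R -> Prop) (g : R -> V -> R) (g' : V -> R) t x :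
  (forall y, is_deriv_within I (fun s => g s y) t (g' y)) ->
  is_deriv_within I (fun s => lap nbrs w mu (g s) x) t (lap nbrs w mu g' x).
Proof.
  intros H. unfold lap.
  apply (list_sum_deriv I (nbrs x) (fun s y => w x y / mu x * (g s y - g s x))
                                    (fun y => w x y / mu x * (g' y - g' x))).
  intros y _. apply deriv_within_scal, deriv_within_minus; apply H.
Qed.

Lemma iter_lap_deriv (I : R -> Prop) (g : R -> V -> R) (g' : V -> R) t k :
  (forall y, is_deriv_within I (fun s => g s y) t (g' y)) ->
  forall x, is_deriv_within I (fun s => Nat.iter k (lap nbrs w mu) (g s) x) t
                              (Nat.iter k (lap nbrs w mu) g' x).
Proof.
  intros H. induction k; intros x; simpl; [apply H|].
  apply (lap_deriv I (fun s => Nat.iter k (lap nbrs w mu) (g s))). apply IHk.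
Qed.

Lemma weighted_diff_sum_bound (l : list V) (c f : V -> R) fx B :
  (forall y, In y l -> 0 <= c y) -> Rabs fx <= B -> (forall y, In y l -> Rabs (f y) <= B) ->
  Rabs (fold_right Rplus 0 (map (fun y => c y * (f y - fx)) l)) <=
    2 * fold_right Rplus 0 (map c l) * B.
Proof.
  induction l as [|y l IH]; intros Hc Hx Hy; simpl; [rewrite Rabs_R0; lra|].
  eapply Rle_trans; [apply Rabs_triang|].
  assert (Hcy : 0 <= c y) by (apply Hc; simpl; auto).
  assert (Hdiff : Rabs (f y - fx) <= 2 * B).
  { eapply Rle_trans; [apply Rabs_triang|]. rewrite Rabs_Ropp.
    pose proof (Hy y (or_introl eq_refl)). lra. }
  assert (Rabs (c y * (f y - fx)) <= 2 * c y * B)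
    by (rewrite Rabs_mult, Rabs_right by lra; nra).
  pose proof (IH (fun z Hz => Hc z (or_intror Hz)) Hx (fun z Hz => Hy z (or_intror Hz))).
  lra.
Qed.

Lemma weights_nonneg x y : weights_ok nbrs w mu -> In y (nbrs x) -> 0 <= w x y / mu x.
Proof.
  intros [Hw Hmu] Hy. destruct (Hw x y Hy) as [_ Hpos].
  apply Rlt_le, Rdiv_lt_0_compat; auto.
Qed.

Lemma Deg_nonneg x : weights_ok nbrs w mu -> 0 <= Deg nbrs w mu x.
Proof.
  intros Hwk. unfold Deg. generalize (fun y => weights_nonneg x y Hwk).
  induction (nbrs x) as [|z l IH]; simpl; intros Hc; [lra|].
  pose proof (Hc z (or_introl eq_refl)). pose proof (IH (fun y Hy => Hc y (or_intror Hy))).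
  lra.
Qed.

Lemma lap_bound (f : V -> R) x B : weights_ok nbrs w mu ->
  Rabs (f x) <= B -> (forall y, In y (nbrs x) -> Rabs (f y) <= B) ->
  Rabs (lap nbrs w mu f x) <= 2 * Deg nbrs w mu x * B.
Proof.
  intros Hwk. unfold lap, Deg.
  apply weighted_diff_sum_bound. intros; apply weights_nonneg; auto.
Qed.

Variables (p : V) (d : V -> nat).

Lemma dist_root : is_dist_to nbrs p d -> d p = O.
Proof. intros H. destruct (H p) as [_ Hm]. specialize (Hm O (walk0 _ p)). lia. Qed.

Lemma dist_pos x : is_dist_to nbrs p d -> x <> p -> (1 <= d x)%nat.
Proof.
  intros H Hx. destruct (H x) as [Hw _]. destruct (d x) eqn:E; [|lia].
  inversion Hw; subst. congruence.
Qed.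

Lemma dist_nbr x y : simple_graph nbrs -> is_dist_to nbrs p d -> In y (nbrs x) ->
  (d y <= S (d x))%nat.
Proof.
  intros [_ [_ Hsym]] H Hy. destruct (H y) as [_ Hm]. apply Hm.
  econstructor; [apply Hsym; eauto | apply (proj1 (H x))].
Qed.

End Laplacian.

(* A function bounded by H(d(x, p)) has
   Delta^k f bounded by weight k (d(x, p)), where the "level"
   max(n, 1) + k + L grows by one with each application of Delta: at a vertex
   x <> p the degree bound D' d^alpha is absorbed by the factor
   2 D' level^alpha, and at the root, where no degree bound is assumed, the
   growth of H itself (hypothesis [deg_root]) absorbs Deg(p). *)
Section LaplacianPowers.
Context {V : Type} (nbrs : V -> list V) (w : V -> V -> R) (mu : V -> R) (p : V) (d : V -> nat).
Hypothesis graph : simple_graph nbrs.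
Hypothesis weights : weights_ok nbrs w mu.
Hypothesis dist : is_dist_to nbrs p d.
Variables (D' alpha : R) (L : nat) (H : nat -> R).
Hypothesis D'_nonneg : 0 <= D'.
Hypothesis alpha_nonneg : 0 <= alpha.
Hypothesis H_nonneg : forall m, 0 <= H m.
Hypothesis H_mono : forall m m', (m <= m')%nat -> H m <= H m'.
Hypothesis deg_far : forall y, y <> p -> Deg nbrs w mu y <= D' * Rpower (INR (d y)) alpha.
Hypothesis deg_root : forall m, (L < m)%nat ->
  Deg nbrs w mu p * H m <= D' * Rpower (INR m) alpha * H (S m).

Definition level (k n : nat) : nat := (Nat.max n 1 + k + L)%nat.

Definition weight (k n : nat) : R :=
  (2 * D' * Rpower (INR (level k n)) alpha) ^ k * H (level k n).

Lemma weight_base_nonneg k n : 0 <= 2 * D' * Rpower (INR (level k n)) alpha.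
Proof. pose proof (Rpower_pos (INR (level k n)) alpha). nra. Qed.

Lemma weight_nonneg k n : 0 <= weight k n.
Proof.
  unfold weight. apply Rmult_le_pos; [apply pow_le, weight_base_nonneg | apply H_nonneg].
Qed.

Lemma weight_mono k j n : (j <= n)%nat -> weight k j <= weight k n.
Proof.
  intros Hjn. unfold weight.
  assert (Hlev : (level k j <= level k n)%nat) by (unfold level; lia).
  apply Rmult_le_compat; [apply pow_le, weight_base_nonneg | apply H_nonneg | | apply H_mono; auto].
  apply pow_incr. split; [apply weight_base_nonneg|].
  apply Rmult_le_compat_l; [lra|]. apply Rpower_nat_mono; auto. unfold level. lia.
Qed.

Lemma weight_step_far k n : (1 <= n)%nat ->
  2 * (D' * Rpower (INR n) alpha) * weight k (S n) <= weight (S k) n.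
Proof.
  intros Hn. unfold weight.
  replace (level (S k) n) with (level k (S n)) by (unfold level; lia).
  set (m := level k (S n)). rewrite <- tech_pow_Rmult.
  assert (Hnm : Rpower (INR n) alpha <= Rpower (INR m) alpha)
    by (apply Rpower_nat_mono; auto; unfold m, level; lia).
  pose proof (pow_le _ k (weight_base_nonneg k (S n))). fold m in H0.
  pose proof (H_nonneg m).
  assert (0 <= (2 * D' * Rpower (INR m) alpha) ^ k * H m) by (apply Rmult_le_pos; auto).
  replace (2 * (D' * Rpower (INR n) alpha) * ((2 * D' * Rpower (INR m) alpha) ^ k * H m))
    with ((2 * D' * Rpower (INR n) alpha) * ((2 * D' * Rpower (INR m) alpha) ^ k * H m)) by ring.
  apply Rle_trans with ((2 * D' * Rpower (INR m) alpha) * ((2 * D' * Rpower (INR m) alpha) ^ k * H m)).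
  - apply Rmult_le_compat_r; auto. apply Rmult_le_compat_l; lra.
  - right; ring.
Qed.

Lemma weight_step_root k : 2 * Deg nbrs w mu p * weight k 1 <= weight (S k) 0.
Proof.
  unfold weight.
  replace (level (S k) 0) with (S (level k 1)) by (unfold level; lia).
  set (m := level k 1).
  assert (Hm : (L < m)%nat) by (unfold m, level; lia).
  assert (Hmm : Rpower (INR m) alpha <= Rpower (INR (S m)) alpha)
    by (apply Rpower_nat_mono; auto; unfold m, level; lia).
  assert (Hpow : (2 * D' * Rpower (INR m) alpha) ^ k <= (2 * D' * Rpower (INR (S m)) alpha) ^ k).
  { apply pow_incr. split; [apply weight_base_nonneg|]. apply Rmult_le_compat_l; lra. }
  pose proof (pow_le _ k (weight_base_nonneg k 1)). fold m in H0.
  pose proof (deg_root m Hm) as Hroot.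
  pose proof (H_nonneg (S m)). pose proof (Rpower_pos (INR m) alpha).
  assert (Hroot' : Deg nbrs w mu p * H m <= D' * Rpower (INR (S m)) alpha * H (S m)).
  { eapply Rle_trans; [exact Hroot|]. apply Rmult_le_compat_r; [lra|].
    apply Rmult_le_compat_l; lra. }
  assert (0 <= Deg nbrs w mu p * H m)
    by (apply Rmult_le_pos; [apply Deg_nonneg; auto | apply H_nonneg]).
  rewrite <- tech_pow_Rmult.
  replace (2 * Deg nbrs w mu p * ((2 * D' * Rpower (INR m) alpha) ^ k * H m))
    with (2 * (2 * D' * Rpower (INR m) alpha) ^ k * (Deg nbrs w mu p * H m)) by ring.
  replace (2 * D' * Rpower (INR (S m)) alpha * (2 * D' * Rpower (INR (S m)) alpha) ^ k * H (S m))
    with (2 * (2 * D' * Rpower (INR (S m)) alpha) ^ k * (D' * Rpower (INR (S m)) alpha * H (S m)))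
    by ring.
  apply Rmult_le_compat; [lra | auto | lra | auto].
Qed.

Lemma lap_weight_step (F : V -> R) k :
  (forall z, Rabs (F z) <= weight k (d z)) ->
  forall y, Rabs (lap nbrs w mu F y) <= weight (S k) (d y).
Proof.
  intros HF y.
  (* y and its neighbours lie at distance at most d y + 1 from the root *)
  assert (Hlap : Rabs (lap nbrs w mu F y) <= 2 * Deg nbrs w mu y * weight k (S (d y))).
  { apply lap_bound; auto.
    - eapply Rle_trans; [apply HF | apply weight_mono; lia].
    - intros z Hz. eapply Rle_trans; [apply HF | apply weight_mono].
      apply (dist_nbr nbrs p d y z); auto. }
  pose proof (weight_nonneg k (S (d y))).
  destruct (classic (y = p)) as [->|Hyp].
  - rewrite (dist_root nbrs p d dist) in *. pose proof (weight_step_root k). lra.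
  - eapply Rle_trans; [exact Hlap|]. eapply Rle_trans; [|apply weight_step_far].
    + apply Rmult_le_compat_r; auto. apply Rmult_le_compat_l; [lra | apply deg_far; auto].
    + apply (dist_pos nbrs p d); auto.
Qed.

Lemma lap_power_bound (F : V -> R) :
  (forall y, Rabs (F y) <= H (d y)) ->
  forall k y, Rabs (Nat.iter k (lap nbrs w mu) F y) <= weight k (d y).
Proof.
  intros HF k. induction k; intros y; simpl.
  - unfold weight. simpl. rewrite Rmult_1_l.
    eapply Rle_trans; [apply HF | apply H_mono; unfold level; lia].
  - apply lap_weight_step; auto.
Qed.

End LaplacianPowers.

(* The growth profile m^(A1 m) of the hypothesis on u (with 0^0 = 1). *)
Definition growth_weight (A1 : R) (m : nat) : R := Rpower (INR m) (A1 * INR m).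

Lemma growth_weight_zero A1 : growth_weight A1 0 = 1.
Proof. unfold growth_weight, Rpower. simpl. rewrite Rmult_0_r, Rmult_0_l. apply exp_0. Qed.

Lemma growth_weight_mono A1 m m' : 0 <= A1 -> (m <= m')%nat ->
  growth_weight A1 m <= growth_weight A1 m'.
Proof.
  intros HA Hm. destruct m as [|m].
  - rewrite growth_weight_zero. unfold growth_weight, Rpower. rewrite <- exp_0. apply exp_le.
    destruct m' as [|m']; [simpl; lra|].
    apply Rmult_le_pos; [apply Rmult_le_pos; auto; apply pos_INR|].
    rewrite <- ln_1. apply ln_le; [lra | apply (le_INR 1); lia].
  - unfold growth_weight, Rpower. apply exp_le.
    assert (0 <= ln (INR (S m))) by (rewrite <- ln_1; apply ln_le; [lra | apply (le_INR 1); lia]).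
    assert (ln (INR (S m)) <= ln (INR m')) by (apply ln_le; [apply lt_0_INR | apply le_INR]; lia).
    assert (INR (S m) <= INR m') by (apply le_INR; auto).
    pose proof (pos_INR (S m)).
    rewrite !Rmult_assoc. apply Rmult_le_compat_l; auto. apply Rmult_le_compat; lra.
Qed.

Lemma growth_weight_ge1 A1 m : 0 <= A1 -> 1 <= growth_weight A1 m.
Proof.
  intros HA. rewrite <- (growth_weight_zero A1). apply growth_weight_mono; auto. lia.
Qed.

Lemma growth_weight_step A1 m : 0 <= A1 -> (1 <= m)%nat ->
  Rpower (INR m) A1 * growth_weight A1 m <= growth_weight A1 (S m).
Proof.
  intros HA Hm. unfold growth_weight, Rpower. rewrite <- exp_plus. apply exp_le.
  rewrite S_INR.
  assert (0 <= ln (INR m)) by (rewrite <- ln_1; apply ln_le; [lra | apply (le_INR 1); lia]).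
  assert (ln (INR m) <= ln (INR m + 1)) by (apply ln_le; [apply lt_0_INR; lia | lra]).
  pose proof (pos_INR m).
  assert (0 <= A1 * (INR m + 1)) by nra.
  replace (A1 * ln (INR m) + A1 * INR m * ln (INR m)) with (A1 * (INR m + 1) * ln (INR m)) by ring.
  apply Rmult_le_compat_l; auto.
Qed.

Lemma growth_weight_absorbs M D' alpha A1 m : 0 <= D' -> 0 <= A1 -> (1 <= m)%nat ->
  M <= D' * Rpower (INR m) (alpha + A1) ->
  M * growth_weight A1 m <= D' * Rpower (INR m) alpha * growth_weight A1 (S m).
Proof.
  intros HD' HA Hm HM. rewrite Rpower_plus in HM.
  pose proof (growth_weight_ge1 A1 m HA). pose proof (Rpower_pos (INR m) alpha).
  apply Rle_trans with (D' * Rpower (INR m) alpha * (Rpower (INR m) A1 * growth_weight A1 m)).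
  - replace (D' * Rpower (INR m) alpha * (Rpower (INR m) A1 * growth_weight A1 m))
      with (D' * (Rpower (INR m) alpha * Rpower (INR m) A1) * growth_weight A1 m) by ring.
    apply Rmult_le_compat_r; lra.
  - apply Rmult_le_compat_l; [apply Rmult_le_pos; lra|]. apply growth_weight_step; auto.
Qed.

(* Choice of the degree constant: M <= D' m^beta for all m > L, keeping
   D' = D whenever beta > 0 (for beta = 0 the constant must grow to M). *)
Lemma degree_constant_choice M D beta : 0 <= M -> 0 < D -> 0 <= beta ->
  exists D' L, D <= D' /\ (0 < beta -> D' = D) /\
    forall m, (L < m)%nat -> M <= D' * Rpower (INR m) beta.
Proof.
  intros HM HD Hb. destruct (Rle_lt_or_eq_dec 0 beta Hb) as [Hpos|<-].
  - destruct (nat_above (exp (M / (D * beta)))) as [L HL].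
    exists D, L. split; [lra|]. split; [auto|]. intros m Hm.
    assert (Hm0 : 0 < INR m) by (apply lt_0_INR; lia).
    assert (Hln : M / (D * beta) <= ln (INR m)).
    { rewrite <- (ln_exp (M / (D * beta))). apply ln_le; [apply exp_pos|].
      eapply Rle_trans; [apply HL | apply le_INR; lia]. }
    assert (M / D <= beta * ln (INR m)).
    { apply Rmult_le_reg_r with (/ beta); [apply Rinv_0_lt_compat; auto|].
      replace (M / D * / beta) with (M / (D * beta)) by (field; lra).
      replace (beta * ln (INR m) * / beta) with (ln (INR m)) by (field; lra). auto. }
    pose proof (exp_ineq1_le (beta * ln (INR m))).
    unfold Rpower. apply Rmult_le_reg_r with (/ D); [apply Rinv_0_lt_compat; auto|].
    replace (D * exp (beta * ln (INR m)) * / D) with (exp (beta * ln (INR m))) by (field; lra).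
    unfold Rdiv in *. lra.
  - exists (Rmax D M), O. split; [apply Rmax_l|]. split; [lra|].
    intros m _. unfold Rpower. rewrite Rmult_0_l, exp_0, Rmult_1_r. apply Rmax_r.
Qed.

Lemma critical_radius D h : 0 < D -> Rabs h < / exp 1 * sqrt (2 / D) ->
  2 * D * h ^ 2 * exp 2 < 4.
Proof.
  intros HD Hh.
  assert (He : 0 < exp 1) by apply exp_pos.
  assert (Hh' : Rabs h * exp 1 < sqrt (2 / D)).
  { apply Rmult_lt_reg_r with (/ exp 1); [apply Rinv_0_lt_compat; auto|].
    replace (Rabs h * exp 1 * / exp 1) with (Rabs h) by (field; lra). lra. }
  assert (Hsq : (Rabs h * exp 1) ^ 2 < 2 / D).
  { rewrite <- (sqrt_sqrt (2 / D)) by (apply Rlt_le, Rdiv_lt_0_compat; lra).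
    pose proof (Rabs_pos h). simpl. rewrite Rmult_1_r.
    apply Rmult_le_0_lt_compat; auto; apply Rmult_le_pos; lra. }
  assert (Ha : (Rabs h * exp 1) ^ 2 = h ^ 2 * exp 2).
  { rewrite Rpow_mult_distr, pow2_abs. f_equal. simpl. rewrite Rmult_1_r, <- exp_plus.
    f_equal; ring. }
  rewrite Ha in Hsq.
  apply Rmult_lt_reg_r with (/ (2 * D)); [apply Rinv_0_lt_compat; lra|].
  replace (4 * / (2 * D)) with (2 / D) by (field; lra).
  replace (2 * D * h ^ 2 * exp 2 * / (2 * D)) with (h ^ 2 * exp 2) by (field; lra).
  exact Hsq.
Qed.

Lemma weight_taylor_term D' alpha A1 K L n k h :
  weight D' alpha L (fun m => K * growth_weight A1 m) k n * Rabs h ^ (2 * k) / INR (fact (2 * k))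
  = taylor_majorant K (2 * D' * h ^ 2) (alpha + A1) A1 (Nat.max n 1 + L) k.
Proof.
  unfold weight, taylor_majorant, growth_weight.
  replace (level L k n) with (k + (Nat.max n 1 + L))%nat by (unfold level; lia).
  set (b := (Nat.max n 1 + L)%nat). set (m := INR (k + b)).
  assert (Hm : 0 < m) by (unfold m, b; apply lt_0_INR; lia).
  rewrite Rpow_mult_distr, <- (Rpower_pow k (Rpower m alpha)), Rpower_mult by apply Rpower_pos.
  rewrite pow_mult, pow2_abs, (Rpow_mult_distr (2 * D') (h ^ 2) k).
  replace ((alpha + A1) * INR k + A1 * INR b) with (alpha * INR k + A1 * m)
    by (unfold m; rewrite plus_INR; ring).
  rewrite Rpower_plus. unfold Rdiv. ring.
Qed.

Section WaveEquation.
Context {V : Type} (nbrs : V -> list V) (w : V -> V -> R) (mu : V -> R) (p : V) (d : V -> nat).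
Variables (T : Rbar) (u u1 u2 : R -> V -> R).
Hypothesis graph : simple_graph nbrs.
Hypothesis weights : weights_ok nbrs w mu.
Hypothesis dist : is_dist_to nbrs p d.
Hypothesis regular : forall x, C2_with (Itime T) (fun t => u t x) (fun t => u1 t x) (fun t => u2 t x).
Hypothesis wave : forall t x, Itime T t -> u2 t x = lap nbrs w mu (u t) x.

Let Lap := lap nbrs w mu.

Definition time_deriv (x : V) (n : nat) (t : R) : R :=
  Nat.iter (Nat.div2 n) Lap (if Nat.even n then u t else u1 t) x.

Lemma time_deriv_even x k t : time_deriv x (2 * k) t = Nat.iter k Lap (u t) x.
Proof. unfold time_deriv. rewrite Nat.div2_double, Nat.even_even. reflexivity. Qed.

Lemma time_deriv_odd x k t : time_deriv x (S (2 * k)) t = Nat.iter k Lap (u1 t) x.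
Proof.
  unfold time_deriv. rewrite Nat.div2_succ_double.
  replace (S (2 * k)) with (2 * k + 1)%nat by lia. rewrite Nat.even_odd. reflexivity.
Qed.

Lemma time_deriv_spec x n t : Itime T t ->
  is_deriv_within (Itime T) (time_deriv x n) t (time_deriv x (S n) t).
Proof.
  intros Ht. destruct (Nat.Even_or_Odd n) as [[k ->]|[k ->]].
  - rewrite time_deriv_odd.
    apply deriv_within_ext with (fun s => Nat.iter k Lap (u s) x).
    { intros; symmetry; apply time_deriv_even. }
    apply iter_lap_deriv. intros y. apply (regular y t Ht).
  - replace (2 * k + 1)%nat with (S (2 * k)) by lia.
    replace (S (S (2 * k))) with (2 * S k)%nat by lia. rewrite time_deriv_even.
    apply deriv_within_ext with (fun s => Nat.iter k Lap (u1 s) x).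
    { intros; symmetry; apply time_deriv_odd. }
    (* Delta^(k+1) u = Delta^k u_tt *)
    replace (Nat.iter (S k) Lap (u t) x) with (Nat.iter k Lap (u2 t) x).
    + apply iter_lap_deriv. intros y. apply (regular y t Ht).
    + rewrite Nat.iter_succ_r. f_equal. apply functional_extensionality. intros y.
      rewrite (wave t y Ht). reflexivity.
Qed.

Lemma Itime_between t0 t s : Itime T t0 -> Itime T t ->
  Rmin t0 t <= s <= Rmax t0 t -> Itime T s.
Proof.
  intros [H0 H0'] [H1 H1'] Hs. split.
  - apply Rle_trans with (Rmin t0 t); [|lra]. unfold Rmin; destruct Rle_dec; lra.
  - assert (Hb : s <= t0 \/ s <= t) by (unfold Rmax in Hs; destruct Rle_dec; lra).
    destruct T; simpl in *; auto; lra.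
Qed.

Lemma root_bound t0 t : Itime T t0 -> Itime T t ->
  exists K0, forall s, Rmin t0 t <= s <= Rmax t0 t -> Rabs (u s p) <= K0.
Proof.
  intros H0 H1. set (a := Rmin t0 t). set (b := Rmax t0 t).
  assert (Hab : a <= b) by (unfold a, b, Rmin, Rmax; repeat destruct Rle_dec; lra).
  destruct (continuity_ab_maj (fun s => Rabs (u (clamp a b s) p)) a b Hab) as [Mx [HM HMx]].
  - intros c Hc. apply (clamp_continuity a b (fun s => Rabs (u s p))); auto.
    intros eps Heps.
    destruct (deriv_within_cont _ _ _ _ (proj1 (regular p c (Itime_between t0 t c H0 H1 Hc))) eps Heps)
      as [delta [Hdelta Hh]].
    exists delta; split; auto. intros s Hs Hsab.
    eapply Rle_lt_trans; [apply Rabs_triang_inv2|].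
    apply Hh; auto. apply (Itime_between t0 t s H0 H1 Hsab).
  - exists (Rabs (u (clamp a b Mx) p)). intros s Hs.
    specialize (HM s Hs). rewrite clamp_id in HM by auto. exact HM.
Qed.

Lemma segment_lap_power_bound x t0 t alpha A1 C K D' L :
  0 <= D' -> 0 <= alpha -> 0 <= A1 -> Itime T t0 -> Itime T t ->
  (forall y, y <> p -> Deg nbrs w mu y <= D' * Rpower (INR (d y)) alpha) ->
  (forall m, (L < m)%nat ->
     Deg nbrs w mu p * growth_weight A1 m <= D' * Rpower (INR m) alpha * growth_weight A1 (S m)) ->
  (forall s y, Itime T s -> y <> p -> Rabs (u s y) <= C * growth_weight A1 (d y)) ->
  (forall s, Rmin t0 t <= s <= Rmax t0 t -> Rabs (u s p) <= K) ->
  forall k s, Rmin t0 t <= s <= Rmax t0 t ->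
  Rabs (Nat.iter k Lap (u s) x) <=
    weight D' alpha L (fun m => Rmax C K * growth_weight A1 m) k (d x).
Proof.
  intros HD' Hal HA Ht0 Ht Hfar Hroot Hgrowth Hp k s Hs.
  assert (HK : 0 <= Rmax C K).
  { eapply Rle_trans; [apply (Rabs_pos (u s p)) | eapply Rle_trans; [apply Hp; auto | apply Rmax_r]]. }
  pose proof (fun m => growth_weight_ge1 A1 m HA) as Hg1.
  apply (lap_power_bound nbrs w mu p d); auto.
  - intros m. apply Rmult_le_pos; auto. pose proof (Hg1 m). lra.
  - intros m m' Hm. apply Rmult_le_compat_l; auto. apply growth_weight_mono; auto.
  - intros m Hm. specialize (Hroot m Hm).
    replace (Deg nbrs w mu p * (Rmax C K * growth_weight A1 m))
      with (Rmax C K * (Deg nbrs w mu p * growth_weight A1 m)) by ring.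
    replace (D' * Rpower (INR m) alpha * (Rmax C K * growth_weight A1 (S m)))
      with (Rmax C K * (D' * Rpower (INR m) alpha * growth_weight A1 (S m))) by ring.
    apply Rmult_le_compat_l; auto.
  - intros y. destruct (classic (y = p)) as [->|Hy].
    + rewrite (dist_root nbrs p d dist), growth_weight_zero, Rmult_1_r.
      eapply Rle_trans; [apply Hp; auto | apply Rmax_r].
    + eapply Rle_trans; [apply Hgrowth; auto; apply (Itime_between t0 t s); auto|].
      apply Rmult_le_compat_r; [pose proof (Hg1 (d y)); lra | apply Rmax_l].
Qed.

(* Convergence of the Taylor series of u(., x) at t0, evaluated at t, given
   a degree constant D' for the vertices x <> p and a threshold L beyond which
   the growth profile absorbs Deg(p); the even remainders are bounded by the
   majorant, which tends to 0 under the subcritical or critical condition. *)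
Lemma wave_taylor_series x t0 t alpha A1 C D' L :
  0 <= D' -> 0 <= alpha -> 0 <= A1 -> alpha + A1 <= 2 ->
  (forall y, y <> p -> Deg nbrs w mu y <= D' * Rpower (INR (d y)) alpha) ->
  (forall m, (L < m)%nat ->
     Deg nbrs w mu p * growth_weight A1 m <= D' * Rpower (INR m) alpha * growth_weight A1 (S m)) ->
  (forall s y, Itime T s -> y <> p -> Rabs (u s y) <= C * growth_weight A1 (d y)) ->
  Itime T t0 -> Itime T t ->
  (alpha + A1 < 2 \/ 2 * D' * (t - t0) ^ 2 * exp 2 < 4) ->
  is_series (fun n => time_deriv x n t0 / INR (fact n) * (t - t0) ^ n) (u t x).
Proof.
  intros HD' Hal HA Hsum Hfar Hroot Hgrowth Ht0 Ht Hcase.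
  destruct (root_bound t0 t Ht0 Ht) as [K HK].
  set (a := Rmin t0 t) in *. set (b := Rmax t0 t) in *.
  assert (Ht0ab : a <= t0 <= b) by (unfold a, b, Rmin, Rmax; repeat destruct Rle_dec; lra).
  assert (Htab : a <= t <= b) by (unfold a, b, Rmin, Rmax; repeat destruct Rle_dec; lra).
  assert (HKC : 0 <= Rmax C K)
    by (eapply Rle_trans; [apply (Rabs_pos (u t0 p)) | eapply Rle_trans; [apply HK; auto | apply Rmax_r]]).
  set (W := weight D' alpha L (fun m => Rmax C K * growth_weight A1 m)).
  pose proof (segment_lap_power_bound x t0 t alpha A1 C K D' L HD' Hal HA Ht0 Ht Hfar Hroot Hgrowth HK)
    as Hpow. fold a b W in Hpow.
  apply series_of_even_remainders
    with (taylor_majorant (Rmax C K) (2 * D' * (t - t0) ^ 2) (alpha + A1) A1 (Nat.max (d x) 1 + L)).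
  - apply taylor_majorant_lim; try lra; [pose proof (pow2_ge_0 (t - t0)); nra | lia].
  - intros k. rewrite <- weight_taylor_term. fold W.
    change (u t x) with (time_deriv x O t).
    apply (taylor_remainder a b t0 (time_deriv x)); auto.
    + intros j s _ Hs. eapply deriv_within_subset; [|apply time_deriv_spec].
      * intros r Hr. apply (Itime_between t0 t r); auto.
      * apply (Itime_between t0 t s); auto.
    + intros s Hs. rewrite time_deriv_even. apply Hpow; auto.
  - intros k. rewrite <- weight_taylor_term. fold W.
    rewrite time_deriv_even. unfold Rdiv.
    rewrite !Rabs_mult, Rabs_inv, <- RPow_abs, (Rabs_right (INR (fact (2 * k))))
      by (apply Rle_ge, pos_INR).
    pose proof (INR_fact_lt_0 (2 * k)). pose proof (pow_le (Rabs (t - t0)) (2 * k) (Rabs_pos _)).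
    replace (Rabs (Nat.iter k Lap (u t0) x) * / INR (fact (2 * k)) * Rabs (t - t0) ^ (2 * k))
      with (Rabs (Nat.iter k Lap (u t0) x) * (Rabs (t - t0) ^ (2 * k) * / INR (fact (2 * k)))) by ring.
    rewrite Rmult_assoc. apply Rmult_le_compat_r; [|apply Hpow; auto].
    apply Rmult_le_pos; [lra | apply Rlt_le, Rinv_0_lt_compat; lra].
Qed.

End WaveEquation.

Theorem theorem1p3 (V : Type) (nbrs : V -> list V) (w : V -> V -> R) (mu : V -> R)
  (p : V) (d : V -> nat) (D alpha : R) (T : Rbar) (u : R -> V -> R)
  (C A1 : R) :
  simple_graph nbrs -> connected nbrs -> weights_ok nbrs w mu ->
  is_dist_to nbrs p d ->
  0 < D -> 0 <= alpha <= 2 ->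
  (forall x, x <> p -> Deg nbrs w mu x <= D * Rpower (INR (d x)) alpha) ->
  Rbar_lt 0 T ->
  (exists u1 u2 : R -> V -> R,
     (forall x, C2_with (Itime T) (fun t => u t x) (fun t => u1 t x) (fun t => u2 t x)) /\
     (forall t x, Itime T t -> u2 t x = lap nbrs w mu (u t) x)) ->
  0 < C -> 0 <= A1 <= 2 - alpha ->
  (forall t x, Itime T t -> x <> p ->
     Rabs (u t x) <= C * Rpower (INR (d x)) (A1 * INR (d x))) ->
  forall x,
    (A1 < 2 - alpha -> analytic_radius (Itime T) (fun t => u t x) p_infty) /\
    (A1 = 2 - alpha ->
       analytic_radius (Itime T) (fun t => u t x) (Finite (/ exp 1 * sqrt (2 / D)))).
Proof.
  intros graph _ weights dist HD Halpha Hdeg _ [u1 [u2 [regular wave]]] _ HA1 Hgrowth x.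
  destruct (degree_constant_choice (Deg nbrs w mu p) D (alpha + A1)
              (Deg_nonneg nbrs w mu p weights) HD ltac:(lra)) as [D' [L [HDD' [Hcrit Hchoice]]]].
  assert (Hfar : forall y, y <> p -> Deg nbrs w mu y <= D' * Rpower (INR (d y)) alpha).
  { intros y Hy. eapply Rle_trans; [apply Hdeg; auto|].
    apply Rmult_le_compat_r; [apply Rlt_le, Rpower_pos | auto]. }
  assert (Hroot : forall m, (L < m)%nat -> Deg nbrs w mu p * growth_weight A1 m <=
                    D' * Rpower (INR m) alpha * growth_weight A1 (S m)).
  { intros m Hm. apply growth_weight_absorbs; auto; lra || lia. }
  split; intros Hcase; exists (time_deriv nbrs w mu u u1 x);
    (split; [reflexivity|]); (split; [intros; eapply time_deriv_spec; eauto|]);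
    intros t0 t Ht0 Ht Hr;
    apply (wave_taylor_series nbrs w mu p d T u u1 u2 graph weights dist regular wave
             x t0 t alpha A1 C D' L); auto; try lra.
  rewrite Hcrit in * by lra. right. apply critical_radius; auto.
Qed.
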